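(* Assume the Setting and consider Algorithm 1 with noisy data $y^\delta$ ($\|y^\delta-y\|\le\delta$, $\delta>0$) and arbitrary admissible parameters. Let $\hat x$ be any solution of $F(x)=y$ with $\hat x\in B_{2\rho}(x_0)$. Let $k\ge 0$ be an integer such that the iterates $x_0^\delta,\dots,x_k^\delta$ are defined by Algorithm 1 and $x_n^\delta\in B_{2\rho}(x_0)$ for all $0\le n<k$. Define $\gamma_n^\delta:=\langle m_n^\delta, x_n^\delta-\hat x\rangle$ for $0\le n\le k$. Then $\gamma_n^\delta\le\tilde\gamma_n^\delta$ for all $0\le n\le k$.
   Context: Setting. Let $X,Y$ be real Hilbert spaces. Let $\mathcal R:X\to(-\infty,\infty]$ be proper, lower semicontinuous and strongly convex with constant $\sigma>0$, i.e. $\mathcal R(t\bar x+(1-t)x)+\sigma t(1-t)\|\bar x-x\|^2\le t\mathcal R(\bar x)+(1-t)\mathcal R(x)$ for all $\bar x,x\in\mathrm{dom}(\mathcal R)$ and $t\in[0,1]$. For $\xi\in\partial\mathcal R(x)$ (subdifferential) the Bregman distance is $D_{\mathcal R}^{\xi}(z,x)=\mathcal R(z)-\mathcal R(x)-\langle\xi,z-x\rangle$. The convex conjugate $\mathcal R^*$ is differentiable with $\|\nabla\mathcal R^*(\bar\xi)-\nabla\mathcal R^*(\xi)\|\le\|\bar\xi-\xi\|/(2\sigma)$, and $\nabla\mathcal R^*(\xi)=\arg\min_{x\in X}\{\mathcal R(x)-\langle\xi,x\rangle\}$ (unique minimizer), with $\xi\in\partial\mathcal R(\nabla\mathcal R^*(\xi))$.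 Let $F:\mathrm{dom}(F)\subset X\to Y$ and $y\in Y$. Assume: (b) there are $\rho>0$, $x_0\in X$, $\xi_0\in\partial\mathcal R(x_0)$ with $B_{2\rho}(x_0):=\{x:\|x-x_0\|\le 2\rho\}\subset\mathrm{dom}(F)$, and $F(x)=y$ has a solution $\bar x$ with $D_{\mathcal R}^{\xi_0}(\bar x,x_0)\le\sigma\rho^2$; (c) $F$ is weakly closed: if $x_n\in\mathrm{dom}(F)$, $x_n\rightharpoonup x$ and $F(x_n)\to v$, then $x\in\mathrm{dom}(F)$ and $F(x)=v$; (d) there are bounded linear operators $L(x):X\to Y$, $x\in B_{2\rho}(x_0)$, with $x\mapsto L(x)$ continuous on $B_{2\rho}(x_0)$, a constant $\eta\in[0,1)$ with $\|F(x)-F(\bar x)-L(\bar x)(x-\bar x)\|\le\eta\|F(x)-F(\bar x)\|$ for all $x,\bar x\in B_{2\rho}(x_0)$, and a constant $L>0$ with $\|L(x)\|\le L$ on $B_{2\rho}(x_0)$. Algorithm 1 (noisy data $y^\delta$ with $\|y^\delta-y\|\le\delta$, $\delta>0$). Parameters: $\tau>1$, $\beta\in(0,\infty]$, $\mu_0>0$, $\mu_1>0$, and a fixed choice of one of two step-size rules: (constant) $\alpha_n^\delta=\mu_0/L^2$, or (adaptive) $\alpha_n^\delta=\min\{\mu_0\|r_n^\delta\|^2/\|g_n^\delta\|^2,\mu_1\}$ (with $\mu_0\|r_n^\delta\|^2/\|g_n^\delta\|^2:=+\infty$ if $g_n^\delta=0$). Set $\xi_{-1}^\delta=\xi_0^\delta=\xi_0$,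 $x_0^\delta=x_0=\nabla\mathcal R^*(\xi_0)$. For $n\ge0$: (i) $r_n^\delta:=F(x_n^\delta)-y^\delta$; if $\|r_n^\delta\|\le\tau\delta$, stop and output $x_n^\delta$ (the stopping index is denoted $n_\delta$). (ii) $g_n^\delta:=L(x_n^\delta)^*r_n^\delta$ and $\alpha_n^\delta$ by the chosen rule. (iii) $m_n^\delta:=\xi_n^\delta-\xi_{n-1}^\delta$; $\tilde\gamma_0^\delta:=0$ and for $n\ge1$, $\tilde\gamma_n^\delta:=\langle m_n^\delta,x_n^\delta-x_{n-1}^\delta\rangle-(1-\eta)\alpha_{n-1}^\delta\|r_{n-1}^\delta\|^2+(1+\eta)\alpha_{n-1}^\delta\delta\|r_{n-1}^\delta\|+\beta_{n-1}^\delta\tilde\gamma_{n-1}^\delta$. (iv) $\beta_n^\delta:=\min\{\max\{0,(\alpha_n^\delta\langle g_n^\delta,m_n^\delta\rangle-2\sigma\tilde\gamma_n^\delta)/\|m_n^\delta\|^2\},\beta\}$ if $m_n^\delta\ne0$, and $\beta_n^\delta:=0$ if $m_n^\delta=0$. (v) $\xi_{n+1}^\delta:=\xi_n^\delta-\alpha_n^\delta g_n^\delta+\beta_n^\delta m_n^\delta$, $x_{n+1}^\delta:=\nabla\mathcal R^*(\xi_{n+1}^\delta)$. *)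

From HB Require Import structures.
From mathcomp Require Import all_boot all_order all_algebra.
From mathcomp Require Import reals constructive_ereal.

Set Implicit Arguments.
Unset Strict Implicit.
Unset Printing Implicit Defensive.

Import Order.TTheory GRing.Theory Num.Theory.
Local Open Scope ring_scope.

Section Hilbert.
Variables (R : realType) (X : lmodType R) (ip : X -> X -> R).

Definition is_inner_product : Prop :=
  (forall x y, ip x y = ip y x) /\
  (forall (a : R) x y z, ip (a *: x + y) z = a * ip x z + ip y z) /\
  (forall x, 0 <= ip x x) /\
  (forall x, ip x x = 0 -> x = 0).

Definition ipnorm (x : X) : R := Num.sqrt (ip x x).

Definition cvg_seq (u : nat -> R) (l : R) : Prop :=
  forall e : R, 0 < e -> exists N : nat, forall n, (N <= n)%N -> `|u n - l| < e.

Definition is_complete : Prop :=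
  forall u : nat -> X,
    (forall e : R, 0 < e -> exists N : nat, forall m n, (N <= m)%N -> (N <= n)%N ->
        ipnorm (u m - u n) < e) ->
    exists l : X, cvg_seq (fun n => ipnorm (u n - l)) 0.

Definition is_hilbert : Prop := is_inner_product /\ is_complete.

Definition inB (c : X) (r : R) (x : X) : Prop := ipnorm (x - c) <= r.

Variable Rf : X -> \bar R.

Definition proper_fun : Prop :=
  (exists x, (Rf x < +oo)%E) /\ (forall x, Rf x != -oo%E).

Definition lsc_fun : Prop :=
  forall (x : X) (t : R), (t%:E < Rf x)%E ->
    exists e : R, 0 < e /\ forall z, ipnorm (z - x) < e -> (t%:E < Rf z)%E.

Definition strongly_convex (sigma : R) : Prop :=
  forall (xb x : X) (t : R), (Rf xb < +oo)%E -> (Rf x < +oo)%E -> 0 <= t <= 1 ->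
    (Rf (t *: xb + (1 - t) *: x) + (sigma * t * (1 - t) * ipnorm (xb - x) ^+ 2)%:E
       <= t%:E * Rf xb + (1 - t)%:E * Rf x)%E.

Definition in_subdiff (x xi : X) : Prop :=
  Rf x \is a fin_num /\ forall z, (Rf x + (ip xi (z - x))%:E <= Rf z)%E.

Definition bregman (xi z x : X) : \bar R := (Rf z - Rf x - (ip xi (z - x))%:E)%E.

(* x = \nabla Rf^*(xi), i.e. x minimizes Rf(.) - <xi, .>
   (the minimizer is unique by strong convexity) *)
Definition is_grad_conj (xi x : X) : Prop :=
  forall z, (Rf x - (ip xi x)%:E <= Rf z - (ip xi z)%:E)%E.

End Hilbert.

Definition weakly_closed (R : realType) (X Y : lmodType R)
  (ipX : X -> X -> R) (ipY : Y -> Y -> R) (D : X -> Prop) (F : X -> Y) : Prop :=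
  forall (u : nat -> X) (x : X) (v : Y),
    (forall n, D (u n)) ->
    (forall z, cvg_seq (fun n => ipX z (u n)) (ipX z x)) ->
    cvg_seq (fun n => ipnorm ipY (F (u n) - v)) 0 ->
    D x /\ F x = v.

Section Algorithm.
Variables (R : realType) (X Y : lmodType R) (ipX : X -> X -> R) (ipY : Y -> Y -> R).
Variables (F : X -> Y) (Lstar : X -> Y -> X) (yd : Y).
Variables (delta eta sigma Lc mu0 mu1 : R) (bcap : \bar R) (adaptive : bool).
Variables (xs xis : nat -> X).

Definition resid (n : nat) : Y := F (xs n) - yd.
Definition grad (n : nat) : X := Lstar (xs n) (resid n).
Definition stepsize (n : nat) : R :=
  if adaptive then
    (if grad n == 0 then mu1
     else Num.min (mu0 * ipnorm ipY (resid n) ^+ 2 / ipnorm ipX (grad n) ^+ 2) mu1)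
  else mu0 / Lc ^+ 2.
(* m_n^delta = xi_n - xi_{n-1}, with xi_{-1} = xi_0 *)
Definition mom (n : nat) : X := if n is n'.+1 then xis n - xis n' else 0.
(* beta_n^delta as a function of tilde gamma_n^delta; bcap = beta in (0, +oo] *)
Definition beta_of (n : nat) (gt : R) : R :=
  if mom n == 0 then 0
  else fine (Order.min
         (Num.max 0 ((stepsize n * ipX (grad n) (mom n) - 2 * sigma * gt)
                      / ipnorm ipX (mom n) ^+ 2))%:E bcap).
Fixpoint gt_beta (n : nat) : R * R :=
  match n with
  | 0 => (0, beta_of 0 0)
  | n'.+1 =>
      let gb := gt_beta n' in
      let gt := ipX (mom n) (xs n - xs n')
                - (1 - eta) * stepsize n' * ipnorm ipY (resid n') ^+ 2
                + (1 + eta) * stepsize n' * delta * ipnorm ipY (resid n')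
                + gb.2 * gb.1 in
      (gt, beta_of n gt)
  end.
Definition gtilde (n : nat) : R := (gt_beta n).1.
Definition beta_n (n : nat) : R := (gt_beta n).2.

End Algorithm.

(* The momentum satisfies m_{n+1} = beta_n m_n - alpha_n g_n, so
   gamma_{n+1} = <m_{n+1}, x_{n+1} - x_n> - alpha_n <g_n, x_n - xhat> + beta_n gamma_n.
   By the adjoint identity <g_n, x_n - xhat> = <r_n, L(x_n)(x_n - xhat)>, and the
   tangential cone condition together with ||y^delta - y|| <= delta bounds this below by
   (1 - eta) ||r_n||^2 - (1 + eta) delta ||r_n||.  Since alpha_n, beta_n >= 0, induction
   on n against the recursion defining tilde gamma_n gives the claim. *)

From HB Require Import structures.
From mathcomp Require Import all_boot all_order all_algebra.
From mathcomp Require Import reals constructive_ereal.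
From mathcomp Require Import ring lra.
Import Order.TTheory GRing.Theory Num.Theory.
Set Implicit Arguments.
Unset Strict Implicit.
Unset Printing Implicit Defensive.

Local Open Scope ring_scope.

Section InnerProduct.
Variables (R : realType) (V : lmodType R) (ip : V -> V -> R).
Hypothesis ip_inner : is_inner_product ip.

Lemma ipC x y : ip x y = ip y x.
Proof. by case: ip_inner. Qed.

Lemma ipDl x y z : ip (x + y) z = ip x z + ip y z.
Proof. by case: ip_inner => _ [linl _]; rewrite -[x in LHS]scale1r linl mul1r. Qed.

Lemma ip0l z : ip 0 z = 0.
Proof. by have := ipDl 0 0 z; rewrite addr0; lra. Qed.

Lemma ipZl a x z : ip (a *: x) z = a * ip x z.
Proof. by case: ip_inner => _ [linl _]; rewrite -[a *: x]addr0 linl ip0l addr0. Qed.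

Lemma ipNl x z : ip (- x) z = - ip x z.
Proof. by rewrite -scaleN1r ipZl mulN1r. Qed.

Lemma ipBl x y z : ip (x - y) z = ip x z - ip y z.
Proof. by rewrite ipDl ipNl. Qed.

Lemma ipDr x y z : ip z (x + y) = ip z x + ip z y.
Proof. by rewrite ipC ipDl !(ipC z). Qed.

Lemma ipZr a x z : ip z (a *: x) = a * ip z x.
Proof. by rewrite ipC ipZl (ipC z). Qed.

Lemma ipBr x y z : ip z (x - y) = ip z x - ip z y.
Proof. by rewrite !(ipC z) ipBl. Qed.

Lemma ipp_ge0 x : 0 <= ip x x.
Proof. by case: ip_inner => _ [_ []]. Qed.

Lemma ipnorm_ge0 x : 0 <= ipnorm ip x.
Proof. exact: sqrtr_ge0. Qed.

Lemma ipnorm_sq x : ipnorm ip x ^+ 2 = ip x x.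
Proof. by rewrite sqr_sqrtr // ipp_ge0. Qed.

Lemma ipnorm_eq0 x : ipnorm ip x = 0 -> x = 0.
Proof.
by case: ip_inner => _ [_ [_ definite]] nx0; apply: definite; rewrite -ipnorm_sq nx0 expr0n.
Qed.

Lemma ipnormN x : ipnorm ip (- x) = ipnorm ip x.
Proof. by rewrite /ipnorm ipNl ipC ipNl opprK. Qed.

Lemma ip_le_norm x y : ip x y <= ipnorm ip x * ipnorm ip y.
Proof.
have [/eqP | pq_neq0] := eqVneq (ipnorm ip x * ipnorm ip y) 0.
  by rewrite mulf_eq0 => /orP[] /eqP /ipnorm_eq0 ->;
    rewrite ?ip0l ?(ipC x) ?ip0l mulr_ge0 ?ipnorm_ge0.
set p := ipnorm ip x in pq_neq0 *; set q := ipnorm ip y in pq_neq0 *.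
have pq_gt0 : 0 < p * q by rewrite lt_def pq_neq0 mulr_ge0 ?ipnorm_ge0.
(* expand 0 <= ||q x - p y||^2 = 2 pq (pq - <x, y>) *)
have := ipp_ge0 (q *: x - p *: y).
rewrite !(ipBl, ipBr, ipZl, ipZr) -!ipnorm_sq -/p -/q (ipC y x) => expand_ge0.
by rewrite -(ler_pM2l pq_gt0); nra.
Qed.

Lemma ip_ge_Nnorm x y : - (ipnorm ip x * ipnorm ip y) <= ip x y.
Proof. by have := ip_le_norm x (- y); rewrite ipnormN ipC ipNl ipC; lra. Qed.

Lemma ipnormD x y : ipnorm ip (x + y) <= ipnorm ip x + ipnorm ip y.
Proof.
rewrite -ler_sqr ?nnegrE ?addr_ge0 ?ipnorm_ge0 //.
rewrite ipnorm_sq !(ipDl, ipDr) (ipC y x) sqrrD !ipnorm_sq.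
by have := ip_le_norm x y; lra.
Qed.

Lemma ip_residual_lower_bound (eta delta : R) (r w e : V) :
  0 <= eta -> ipnorm ip w <= delta -> ipnorm ip e <= eta * ipnorm ip (r + w) ->
  (1 - eta) * ipnorm ip r ^+ 2 - (1 + eta) * delta * ipnorm ip r <= ip r (r + w + e).
Proof.
move=> eta_ge0 w_le e_le.
have r_ge0 := ipnorm_ge0 r.
have rw_le : ipnorm ip (r + w) <= ipnorm ip r + delta by have := ipnormD r w; lra.
have rw_bound : ipnorm ip r * ipnorm ip w <= ipnorm ip r * delta by exact: ler_wpM2l.
have re_bound : ipnorm ip r * ipnorm ip e <= ipnorm ip r * (eta * (ipnorm ip r + delta)).
  by apply: ler_wpM2l => //; apply: (le_trans e_le); apply: ler_wpM2l.
rewrite !ipDr -ipnorm_sq.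
have := ip_ge_Nnorm r w; have := ip_ge_Nnorm r e; nra.
Qed.

Lemma ip_momentum_step (a b c gt : R) (g m x x' xh : V) :
  0 <= a -> 0 <= b -> c <= ip g (x - xh) -> ip m (x - xh) <= gt ->
  ip (- (a *: g) + b *: m) (x' - xh)
    <= ip (- (a *: g) + b *: m) (x' - x) - a * c + b * gt.
Proof.
move=> a_ge0 b_ge0 c_le m_le.
have -> : x' - xh = (x' - x) + (x - xh) by rewrite addrA subrK.
rewrite ipDr !(ipDl, ipNl, ipZl).
have := ler_wpM2l a_ge0 c_le; have := ler_wpM2l b_ge0 m_le; lra.
Qed.

End InnerProduct.

Lemma linfunN (R : realType) (X Y : lmodType R) (L : X -> Y) :
  (forall (a : R) u v, L (a *: u + v) = a *: L u + L v) -> forall u, L (- u) = - L u.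
Proof.
move=> L_lin u.
have L0 : L 0 = 0.
  have := L_lin 1 0 0; rewrite !scale1r !addr0 => L00.
  by apply: (addrI (L 0)); rewrite addr0 -L00.
by have := L_lin (-1) u 0; rewrite addr0 L0 addr0 !scaleN1r.
Qed.

Lemma adjoint_residual_lower_bound (R : realType) (X Y : lmodType R)
    (ipX : X -> X -> R) (ipY : Y -> Y -> R) (F : X -> Y) (L : X -> Y) (Ls : Y -> X)
    (eta delta : R) (x xh : X) (yd : Y) :
  is_inner_product ipY ->
  (forall (a : R) u v, L (a *: u + v) = a *: L u + L v) ->
  (forall u v, ipX (Ls v) u = ipY v (L u)) ->
  0 <= eta ->
  ipnorm ipY (F xh - F x - L (xh - x)) <= eta * ipnorm ipY (F xh - F x) ->
  ipnorm ipY (yd - F xh) <= delta ->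
  (1 - eta) * ipnorm ipY (F x - yd) ^+ 2 - (1 + eta) * delta * ipnorm ipY (F x - yd)
    <= ipX (Ls (F x - yd)) (x - xh).
Proof.
move=> ipY_inner L_lin L_adj eta_ge0 tcc noise.
have Lx_split : L (x - xh) = (F x - yd) + (yd - F xh) + (F xh - F x - L (xh - x)).
  rewrite -(opprB xh x) (linfunN L_lin) [(F x - yd) + _]addrA subrK addrA.
  by rewrite [F x - F xh + _]addrA subrK subrr add0r.
rewrite L_adj Lx_split; apply: ip_residual_lower_bound => //.
by rewrite [_ + (yd - _)]addrA subrK -(opprB (F xh) (F x)) ipnormN.
Qed.

Section AlgorithmRecursion.
Variables (R : realType) (X Y : lmodType R) (ipX : X -> X -> R) (ipY : Y -> Y -> R).
Variables (F : X -> Y) (Lstar : X -> Y -> X) (yd : Y).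
Variables (delta eta sigma Lc mu0 mu1 : R) (bcap : \bar R) (adaptive : bool).
Variables (xs xis : nat -> X).

Local Notation r := (resid F yd xs).
Local Notation g := (grad F Lstar yd xs).
Local Notation alpha := (stepsize ipX ipY F Lstar yd Lc mu0 mu1 adaptive xs).
Local Notation beta :=
  (beta_n ipX ipY F Lstar yd delta eta sigma Lc mu0 mu1 bcap adaptive xs xis).
Local Notation gt :=
  (gtilde ipX ipY F Lstar yd delta eta sigma Lc mu0 mu1 bcap adaptive xs xis).

Lemma stepsize_ge0 n : 0 < mu0 -> 0 < mu1 -> 0 <= alpha n.
Proof.
move=> mu0_gt0 mu1_gt0; rewrite /stepsize; case: adaptive; last first.
  by rewrite divr_ge0 ?sqr_ge0 ?ltW.
case: ifP => _; first exact: ltW.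
by rewrite le_min (ltW mu1_gt0) divr_ge0 ?mulr_ge0 ?exprn_ge0 ?sqrtr_ge0 ?ltW.
Qed.

Lemma beta_of_ge0 n c :
  (0 < bcap)%E -> 0 <= beta_of ipX ipY F Lstar yd sigma Lc mu0 mu1 bcap adaptive xs xis n c.
Proof.
move=> bcap_gt0; rewrite /beta_of; case: ifP => // _.
case: bcap bcap_gt0 => [b| |] //= b_gt0; rewrite /Order.min; case: ifP => _ /=.
- by rewrite le_max lexx.
- by rewrite ltW // -lte_fin.
- by rewrite le_max lexx.
- by [].
Qed.

Lemma beta_n_ge0 n : (0 < bcap)%E -> 0 <= beta n.
Proof. by move=> bcap_gt0; rewrite /beta_n; case: n => [|n] /=; apply: beta_of_ge0. Qed.

Lemma gtildeS n :
  gt n.+1 = ipX (mom xis n.+1) (xs n.+1 - xs n)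
            - alpha n * ((1 - eta) * ipnorm ipY (r n) ^+ 2 - (1 + eta) * delta * ipnorm ipY (r n))
            + beta n * gt n.
Proof. by rewrite /gtilde /beta_n /=; ring. Qed.

Lemma momS n :
  xis n.+1 = xis n - alpha n *: g n + beta n *: mom xis n ->
  mom xis n.+1 = - (alpha n *: g n) + beta n *: mom xis n.
Proof. by move=> /= ->; rewrite addrC !addrA addNr add0r. Qed.

End AlgorithmRecursion.

Theorem mainTheorem1 (R : realType) (X Y : lmodType R)
  (ipX : X -> X -> R) (ipY : Y -> Y -> R)
  (Rf : X -> \bar R) (sigma : R)
  (D : X -> Prop) (F : X -> Y) (y : Y)
  (rho : R) (x0 xi0 : X)
  (Lop : X -> X -> Y) (Lstar : X -> Y -> X) (eta Lc : R)
  (* setting *)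
  (HX : is_hilbert ipX) (HY : is_hilbert ipY)
  (HRproper : proper_fun Rf) (HRlsc : lsc_fun ipX Rf)
  (Hsigma : 0 < sigma) (HRsc : strongly_convex ipX Rf sigma)
  (* (b) *)
  (Hrho : 0 < rho) (Hxi0 : in_subdiff ipX Rf x0 xi0)
  (HBdom : forall x, inB ipX x0 (2 * rho) x -> D x)
  (Hsol : exists xb, D xb /\ F xb = y /\
            (bregman ipX Rf xi0 xb x0 <= (sigma * rho ^+ 2)%:E)%E)
  (* (c) *)
  (Hwc : weakly_closed ipX ipY D F)
  (* (d) *)
  (HLlin : forall x, inB ipX x0 (2 * rho) x ->
     forall (a : R) u v, Lop x (a *: u + v) = a *: Lop x u + Lop x v)
  (HLadj : forall x, inB ipX x0 (2 * rho) x ->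
     forall u v, ipX (Lstar x v) u = ipY v (Lop x u))
  (HLcont : forall x, inB ipX x0 (2 * rho) x -> forall e : R, 0 < e ->
     exists d : R, 0 < d /\ forall x', inB ipX x0 (2 * rho) x' -> ipnorm ipX (x' - x) < d ->
       forall z, ipnorm ipY (Lop x' z - Lop x z) <= e * ipnorm ipX z)
  (Heta : 0 <= eta < 1)
  (Htcc : forall x xb, inB ipX x0 (2 * rho) x -> inB ipX x0 (2 * rho) xb ->
     ipnorm ipY (F x - F xb - Lop xb (x - xb)) <= eta * ipnorm ipY (F x - F xb))
  (HLc : 0 < Lc)
  (HLbd : forall x, inB ipX x0 (2 * rho) x ->
     forall z, ipnorm ipY (Lop x z) <= Lc * ipnorm ipX z)
  (* noisy data and parameters of Algorithm 1 *)
  (yd : Y) (delta : R) (Hdelta : 0 < delta) (Hyd : ipnorm ipY (yd - y) <= delta)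
  (tau mu0 mu1 : R) (bcap : \bar R) (adaptive : bool)
  (Htau : 1 < tau) (Hbcap : (0 < bcap)%E) (Hmu0 : 0 < mu0) (Hmu1 : 0 < mu1)
  (* the solution xhat *)
  (xhat : X) (Hxhat : F xhat = y) (HxhatB : inB ipX x0 (2 * rho) xhat)
  (* iterates of Algorithm 1 up to index k *)
  (k : nat) (xs xis : nat -> X)
  (Hx0 : xs 0%N = x0) (Hxis0 : xis 0%N = xi0)
  (Hgrad : forall n, (n <= k)%N -> is_grad_conj ipX Rf (xis n) (xs n))
  (Hrun : forall n, (n < k)%N ->
     tau * delta < ipnorm ipY (resid F yd xs n) /\
     xis n.+1 = xis n
                - stepsize ipX ipY F Lstar yd Lc mu0 mu1 adaptive xs n
                    *: grad F Lstar yd xs n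
                + beta_n ipX ipY F Lstar yd delta eta sigma Lc mu0 mu1 bcap adaptive xs xis n
                    *: mom xis n)
  (HB : forall n, (n < k)%N -> inB ipX x0 (2 * rho) (xs n)) :
  forall n, (n <= k)%N ->
    ipX (mom xis n) (xs n - xhat)
      <= gtilde ipX ipY F Lstar yd delta eta sigma Lc mu0 mu1 bcap adaptive xs xis n.
Proof.
have ipX_inner : is_inner_product ipX by case: HX.
have ipY_inner : is_inner_product ipY by case: HY.
have [eta_ge0 _] := andP Heta.
elim=> [_ | n IHn lt_nk]; first by rewrite /gtilde /= ip0l.
have [_ xisS] := Hrun n lt_nk.
have xn_in_ball := HB n lt_nk.
rewrite gtildeS (momS xisS); apply: ip_momentum_step => //.
- exact: stepsize_ge0.
- exact: beta_n_ge0.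
- apply: adjoint_residual_lower_bound (HLlin _ xn_in_ball) (HLadj _ xn_in_ball) _ _ _ => //.
    exact: Htcc.
  by rewrite Hxhat.
- exact: IHn (ltnW lt_nk).
Qed.
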